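(* For all integers $m,n\ge1$ there exist a Heyting algebra $H$ and monotone polynomials $f,g:H\to H$ such that $\mu.f=f^n(\bot)$, $\mu.g=g^m(\bot)$, $\mu.(f\wedge g)=(f\wedge g)^{m+n-1}(\bot)$ and $(f\wedge g)^{m+n-2}(\bot)\neq(f\wedge g)^{m+n-1}(\bot)$.
   Context: A function $f:H\to H$ is a polynomial if there exist an IPC formula $\phi$, a variable $x$ and a valuation $v$ in $H$ of the other variables of $\phi$ such that $f(h)=[\![\phi]\!]_{(v,h/x)}$ for all $h$. $f\wedge g$ is the pointwise meet; $\mu$ denotes least fixed point. *)

From Stdlib Require Import Arith.

Record HeytingAlgebra := {
  carrier :> Type;
  hle : carrier -> carrier -> Prop;
  hmeet : carrier -> carrier -> carrier;
  hjoin : carrier -> carrier -> carrier;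
  himp : carrier -> carrier -> carrier;
  hbot : carrier;
  htop : carrier;
  hle_refl : forall a, hle a a;
  hle_trans : forall a b c, hle a b -> hle b c -> hle a c;
  hle_antisym : forall a b, hle a b -> hle b a -> a = b;
  hmeet_glb : forall a b c, hle c (hmeet a b) <-> (hle c a /\ hle c b);
  hjoin_lub : forall a b c, hle (hjoin a b) c <-> (hle a c /\ hle b c);
  hbot_least : forall a, hle hbot a;
  htop_greatest : forall a, hle a htop;
  himp_adj : forall a b c, hle (hmeet c a) b <-> hle c (himp a b)
}.

Arguments hle {h}.
Arguments hmeet {h}.
Arguments hjoin {h}.
Arguments himp {h}.
Arguments hbot {h}.
Arguments htop {h}.

Inductive ipc_formula : Type :=
| FVar : nat -> ipc_formula
| FBot : ipc_formula
| FTop : ipc_formula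
| FAnd : ipc_formula -> ipc_formula -> ipc_formula
| FOr : ipc_formula -> ipc_formula -> ipc_formula
| FImp : ipc_formula -> ipc_formula -> ipc_formula.

Fixpoint interp {H : HeytingAlgebra} (v : nat -> H) (phi : ipc_formula) : H :=
  match phi with
  | FVar k => v k
  | FBot => hbot
  | FTop => htop
  | FAnd a b => hmeet (interp v a) (interp v b)
  | FOr a b => hjoin (interp v a) (interp v b)
  | FImp a b => himp (interp v a) (interp v b)
  end.

Definition upd {H : HeytingAlgebra} (v : nat -> H) (x : nat) (h : H) : nat -> H :=
  fun k => if Nat.eqb k x then h else v k.

Definition is_polynomial {H : HeytingAlgebra} (f : H -> H) : Prop :=
  exists (phi : ipc_formula) (x : nat) (v : nat -> H),
    forall h : H, f h = interp (upd v x h) phi.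

Definition monotone {H : HeytingAlgebra} (f : H -> H) : Prop :=
  forall a b : H, hle a b -> hle (f a) (f b).

Definition fmeet {H : HeytingAlgebra} (f g : H -> H) : H -> H :=
  fun h => hmeet (f h) (g h).

Definition is_lfp {H : HeytingAlgebra} (f : H -> H) (a : H) : Prop :=
  f a = a /\ forall b : H, f b = b -> hle a b.

Definition iter_bot {H : HeytingAlgebra} (f : H -> H) (k : nat) : H :=
  Nat.iter k f hbot.

From Stdlib Require Import Arith Lia.

(* The witness is the chain 0 < 1 < ... < m+n-1, which is a Heyting algebra.
   On a finite chain every monotone inflationary map is a polynomial: with
   the elements as constants, F x is the join over all j of (j -> x) /\ F j.
   Take f climbing one step at a time up to n-1 and then jumping to the top,
   and g jumping from the bottom to n and then climbing one step at a time.
   Then f reaches the top after n steps and g after m, but f /\ g is the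
   successor map, which needs all m+n-1 steps. *)

Section LeastFixpoint.

Variable H : HeytingAlgebra.

Lemma hmeet_le_l (a b : H) : hle (hmeet a b) a.
Proof. exact (proj1 (proj1 (hmeet_glb H a b _) (hle_refl H _))). Qed.

Lemma hmeet_le_r (a b : H) : hle (hmeet a b) b.
Proof. exact (proj2 (proj1 (hmeet_glb H a b _) (hle_refl H _))). Qed.

Lemma fmeet_monotone (f g : H -> H) :
  monotone f -> monotone g -> monotone (fmeet f g).
Proof.
  intros Hf Hg a b Hab; apply hmeet_glb; split.
  - apply (hle_trans H _ (f a)); [apply hmeet_le_l | apply Hf, Hab].
  - apply (hle_trans H _ (g a)); [apply hmeet_le_r | apply Hg, Hab].
Qed.

Lemma fmeet_top (f g : H -> H) :
  f htop = htop -> g htop = htop -> fmeet f g htop = htop.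
Proof.
  intros Hf Hg; unfold fmeet; rewrite Hf, Hg.
  apply hle_antisym; [apply htop_greatest|].
  apply hmeet_glb; split; apply hle_refl.
Qed.

Lemma iter_bot_le_fixpoint (f : H -> H) (b : H) k :
  monotone f -> f b = b -> hle (iter_bot f k) b.
Proof.
  intros Hf Hb; induction k as [|k IH]; [apply hbot_least|].
  rewrite <- Hb; exact (Hf _ _ IH).
Qed.

Lemma iter_bot_top_lfp (f : H -> H) k :
  monotone f -> f htop = htop -> iter_bot f k = htop -> is_lfp f (iter_bot f k).
Proof.
  intros Hf Htop Hk; split.
  - rewrite Hk; exact Htop.
  - intros b Hb; exact (iter_bot_le_fixpoint f b k Hf Hb).
Qed.

End LeastFixpoint.

Section Chain.

Variable T : nat.

Definition chain := {k : nat | k <= T}.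

Definition val (a : chain) : nat := proj1_sig a.

Lemma val_le (a : chain) : val a <= T.
Proof. exact (proj2_sig a). Qed.

Lemma val_inj (a b : chain) : val a = val b -> a = b.
Proof.
  destruct a as [a Ha], b as [b Hb]; cbn; intros <-.
  f_equal; apply le_unique.
Qed.

Definition clamp (k : nat) : chain := exist _ (Nat.min k T) (Nat.le_min_r k T).

Definition chain_meet (a b : chain) : chain :=
  exist _ (Nat.min (val a) (val b)) (Nat.le_trans _ _ _ (Nat.le_min_l _ _) (val_le a)).

Definition chain_join (a b : chain) : chain :=
  exist _ (Nat.max (val a) (val b)) (Nat.max_lub _ _ _ (val_le a) (val_le b)).

Definition chain_top : chain := exist _ T (le_n T).

Definition chain_imp (a b : chain) : chain :=
  if val a <=? val b then chain_top else b.

Definition chain_ha : HeytingAlgebra.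
Proof.
  refine {| carrier := chain; hle a b := val a <= val b;
            hmeet := chain_meet; hjoin := chain_join; himp := chain_imp;
            hbot := exist _ 0 (Nat.le_0_l T); htop := chain_top |};
    intros; cbn in *.
  - lia.
  - lia.
  - apply val_inj; lia.
  - lia.
  - lia.
  - lia.
  - apply val_le.
  - pose proof (val_le a); pose proof (val_le b); pose proof (val_le c).
    unfold chain_imp; destruct (Nat.leb_spec (val a) (val b)); cbn; lia.
Defined.

Lemma val_hmeet (a b : chain_ha) : val (hmeet a b) = Nat.min (val a) (val b).
Proof. reflexivity. Qed.

Lemma val_hjoin (a b : chain_ha) : val (hjoin a b) = Nat.max (val a) (val b).
Proof. reflexivity. Qed.

Lemma val_himp (a b : chain_ha) :
  val (himp a b) = if val a <=? val b then T else val b.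
Proof. cbn; unfold chain_imp; destruct (val a <=? val b); reflexivity. Qed.

Lemma val_htop : val (@htop chain_ha) = T.
Proof. reflexivity. Qed.

Lemma val_iter_bot (f : chain_ha -> chain_ha) (h : nat -> nat) k :
  (forall x, val (f x) = h (val x)) -> val (iter_bot f k) = Nat.iter k h 0.
Proof.
  intros Hf; induction k as [|k IH]; [reflexivity|].
  change (iter_bot f (S k)) with (f (iter_bot f k)); rewrite Hf, IH; reflexivity.
Qed.

Definition lift (F : nat -> nat) (x : chain_ha) : chain_ha := clamp (F (val x)).

Lemma val_iter_lift F k :
  val (iter_bot (lift F) k) = Nat.iter k (fun y => Nat.min (F y) T) 0.
Proof. apply val_iter_bot; reflexivity. Qed.

Lemma val_iter_fmeet_lift F G k :
  val (iter_bot (fmeet (lift F) (lift G)) k)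
  = Nat.iter k (fun y => Nat.min (Nat.min (F y) (G y)) T) 0.
Proof. apply val_iter_bot; intros x; cbn; lia. Qed.

Section LiftMonotone.

Variable F : nat -> nat.
Hypothesis F_monotone : forall a b, a <= b <= T -> F a <= F b.
Hypothesis F_inflationary : forall a, a <= T -> a <= F a.

Lemma lift_monotone : monotone (lift F).
Proof.
  intros a b Hab; cbn in *.
  pose proof (val_le b); pose proof (F_monotone (val a) (val b)); lia.
Qed.

Lemma lift_top : lift F htop = htop.
Proof. apply val_inj; cbn; pose proof (F_inflationary T); lia. Qed.

(* Variable [S j] holds the constant [j] and variable [S (S (T + j))] the
   constant [F j]; variable 0 is the argument [x]. *)
Definition step_valuation (k : nat) : chain_ha :=
  match k with
  | 0 => clamp 0
  | S k => if k <=? T then clamp k else clamp (F (k - S T))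
  end.

Lemma val_step_valuation_const j : j <= T -> val (step_valuation (S j)) = j.
Proof. intros Hj; cbn; destruct (Nat.leb_spec j T); cbn; lia. Qed.

Lemma val_step_valuation_image j :
  val (step_valuation (S (S (T + j)))) = Nat.min (F j) T.
Proof.
  unfold step_valuation; destruct (Nat.leb_spec (S (T + j)) T); [lia|].
  cbn; replace (T + j - T) with j by lia; reflexivity.
Qed.

Definition step_formula (j : nat) : ipc_formula :=
  FAnd (FImp (FVar (S j)) (FVar 0)) (FVar (S (S (T + j)))).

Fixpoint steps_formula (J : nat) : ipc_formula :=
  match J with
  | 0 => step_formula 0
  | S J => FOr (steps_formula J) (step_formula (S J))
  end.

Lemma val_interp_step (x : chain_ha) j : j <= T ->
  val (interp (upd step_valuation 0 x) (step_formula j))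
  = if j <=? val x then Nat.min (F j) T else Nat.min (val x) (Nat.min (F j) T).
Proof.
  intros Hj; cbn [interp step_formula]; unfold upd; cbn [Nat.eqb].
  rewrite val_hmeet, val_himp, val_step_valuation_const, val_step_valuation_image
    by exact Hj.
  pose proof (val_le x); destruct (Nat.leb_spec j (val x)); lia.
Qed.

(* Steps with [j <= x] contribute [F j <= F x]; the others collapse to [x],
   because [F j >= j > x]. *)
Lemma val_interp_steps (x : chain_ha) J : J <= T ->
  val (interp (upd step_valuation 0 x) (steps_formula J))
  = Nat.min (F (Nat.min J (val x))) T.
Proof.
  pose proof (val_le x).
  induction J as [|J IH]; intros HJ.
  - cbn [steps_formula]; rewrite val_interp_step by lia.
    destruct (Nat.leb_spec 0 (val x)); [f_equal; f_equal; lia | lia].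
  - cbn [steps_formula interp]; rewrite val_hjoin, IH, val_interp_step by lia.
    destruct (Nat.leb_spec (S J) (val x)).
    + pose proof (F_monotone J (S J)).
      replace (Nat.min (S J) (val x)) with (S J) by lia.
      replace (Nat.min J (val x)) with J by lia; lia.
    + pose proof (F_inflationary (S J)); pose proof (F_inflationary (val x)).
      replace (Nat.min (S J) (val x)) with (val x) by lia.
      replace (Nat.min J (val x)) with (val x) by lia; lia.
Qed.

Lemma lift_polynomial : is_polynomial (lift F).
Proof.
  exists (steps_formula T), 0, step_valuation; intros x.
  apply val_inj; rewrite val_interp_steps by lia.
  pose proof (val_le x); cbn; do 2 f_equal; lia.
Qed.

End LiftMonotone.

End Chain.

Section Witness.

Variables m n : nat.

Local Notation T := (m + n - 1).

Definition climb_then_jump (k : nat) : nat := if S k <? n then S k else T.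

Definition jump_then_climb (k : nat) : nat := Nat.max n (S k).

Lemma climb_then_jump_monotone a b : a <= b <= T -> climb_then_jump a <= climb_then_jump b.
Proof.
  unfold climb_then_jump; destruct (Nat.ltb_spec (S a) n), (Nat.ltb_spec (S b) n); lia.
Qed.

Lemma climb_then_jump_inflationary a : a <= T -> a <= climb_then_jump a.
Proof. unfold climb_then_jump; destruct (Nat.ltb_spec (S a) n); lia. Qed.

Lemma jump_then_climb_monotone a b : a <= b -> jump_then_climb a <= jump_then_climb b.
Proof. unfold jump_then_climb; lia. Qed.

Lemma jump_then_climb_inflationary a : a <= jump_then_climb a.
Proof. unfold jump_then_climb; lia. Qed.

Lemma iter_climb_then_jump k : k < n ->
  Nat.iter k (fun y => Nat.min (climb_then_jump y) T) 0 = k.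
Proof.
  induction k as [|k IH]; intros Hk; [reflexivity|].
  rewrite Nat.iter_succ, IH by lia.
  unfold climb_then_jump; destruct (Nat.ltb_spec (S k) n); lia.
Qed.

Lemma iter_climb_then_jump_top : 1 <= n ->
  Nat.iter n (fun y => Nat.min (climb_then_jump y) T) 0 = T.
Proof.
  intros n_pos.
  replace (@Nat.iter n nat) with (@Nat.iter (S (n - 1)) nat) by (f_equal; lia).
  rewrite Nat.iter_succ, iter_climb_then_jump by lia.
  unfold climb_then_jump; destruct (Nat.ltb_spec (S (n - 1)) n); lia.
Qed.

Lemma iter_jump_then_climb k : 1 <= m -> 1 <= n -> 1 <= k ->
  Nat.iter k (fun y => Nat.min (jump_then_climb y) T) 0 = Nat.min (n + k - 1) T.
Proof.
  intros m_pos n_pos; induction k as [|k IH]; intros Hk; [lia|]; rewrite Nat.iter_succ.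
  destruct k as [|k]; [cbn; unfold jump_then_climb; lia|].
  rewrite IH by lia; unfold jump_then_climb; lia.
Qed.

Lemma iter_meet k :
  Nat.iter k (fun y => Nat.min (Nat.min (climb_then_jump y) (jump_then_climb y)) T) 0
  = Nat.min k T.
Proof.
  induction k as [|k IH]; [reflexivity|]; rewrite Nat.iter_succ, IH.
  unfold climb_then_jump, jump_then_climb.
  destruct (Nat.ltb_spec (S (Nat.min k T)) n); lia.
Qed.

End Witness.

Theorem mainTheorem19 :
  forall m n : nat, 1 <= m -> 1 <= n ->
  exists (H : HeytingAlgebra) (f g : H -> H),
    is_polynomial f /\ is_polynomial g /\ monotone f /\ monotone g /\
    is_lfp f (iter_bot f n) /\
    is_lfp g (iter_bot g m) /\
    is_lfp (fmeet f g) (iter_bot (fmeet f g) (m + n - 1)) /\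
    iter_bot (fmeet f g) (m + n - 2) <> iter_bot (fmeet f g) (m + n - 1).
Proof.
  intros m n Hm Hn.
  pose (T := m + n - 1); pose (F := climb_then_jump m n); pose (G := jump_then_climb n).
  assert (F_mono : forall a b, a <= b <= T -> F a <= F b)
    by apply climb_then_jump_monotone.
  assert (G_mono : forall a b, a <= b <= T -> G a <= G b)
    by (intros; apply jump_then_climb_monotone; lia).
  assert (F_infl : forall a, a <= T -> a <= F a) by apply climb_then_jump_inflationary.
  assert (G_infl : forall a, a <= T -> a <= G a)
    by (intros; apply jump_then_climb_inflationary).
  exists (chain_ha T), (lift T F), (lift T G).
  pose proof (lift_monotone T F F_mono) as f_mono.
  pose proof (lift_monotone T G G_mono) as g_mono.
  pose proof (lift_top T F F_infl) as f_top.
  pose proof (lift_top T G G_infl) as g_top.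
  split; [now apply lift_polynomial|].
  split; [now apply lift_polynomial|].
  do 2 (split; [assumption|]).
  split.
  { apply iter_bot_top_lfp; auto; apply val_inj.
    rewrite val_iter_lift, val_htop; now apply iter_climb_then_jump_top. }
  split.
  { apply iter_bot_top_lfp; auto; apply val_inj.
    rewrite val_iter_lift, val_htop; unfold G, T; rewrite iter_jump_then_climb by lia; lia. }
  split.
  { apply iter_bot_top_lfp; auto using fmeet_monotone, fmeet_top; apply val_inj.
    rewrite val_iter_fmeet_lift, val_htop; unfold F, G, T; rewrite iter_meet; lia. }
  intros E; apply (f_equal (@val T)) in E.
  rewrite !val_iter_fmeet_lift in E; unfold F, G, T in E; rewrite !iter_meet in E; lia.
Qed.
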